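(* Assume $N\ge2$ and that conditions A and D' hold for the stochastic matrices $(p_{ij}(\varepsilon))_{i,j\in\mathbb{X}}$, $\varepsilon\in(0,\varepsilon_0]$, and let $\delta^\circ=\min_{i\in\mathbb{X},\,j\in\mathbb{Y}_i}\delta_{ij}$. Then for every $r\in\mathbb{X}$ the reduced matrices $({}_rp_{ij}(\varepsilon))_{i,j\in{}_r\mathbb{X}}$, $\varepsilon\in(0,\varepsilon_0]$, also satisfy condition A (on the state space ${}_r\mathbb{X}$, with the same $\varepsilon_0$ and transition sets ${}_r\mathbb{Y}_i$) and condition D'; that is, for every $i\in{}_r\mathbb{X}$, $j\in{}_r\mathbb{Y}_i$ there are integers $0\le{}_rl^-_{ij}\le{}_rl^+_{ij}$, reals ${}_ra_{ij}[l]$ with ${}_ra_{ij}[{}_rl^-_{ij}]>0$, and ${}_r\delta_{ij}\in(0,1]$, ${}_rG_{ij}\in(0,\infty)$, ${}_r\varepsilon_{ij}\in(0,\varepsilon_0]$ such that $\big|{}_rp_{ij}(\varepsilon)-\sum_{l={}_rl^-_{ij}}^{{}_rl^+_{ij}}{}_ra_{ij}[l]\varepsilon^l\big|\le{}_rG_{ij}\varepsilon^{{}_rl^+_{ij}+{}_r\delta_{ij}}$ for $0<\varepsilon\le{}_r\varepsilon_{ij}$. Moreover this holds with ${}_r\delta_{ij}\ge\delta^\circ$ for all $j\in{}_r\mathbb{Y}_i$, $i\in{}_r\mathbb{X}$, $r\in\mathbb{X}$.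
   Context: Let $\mathbb{X}=\{1,\dots,N\}$, $0<\varepsilon_0\le1$, and for each $\varepsilon\in(0,\varepsilon_0]$ let $(p_{ij}(\varepsilon))_{i,j\in\mathbb{X}}$ be a stochastic matrix. Condition A: there are nonempty sets $\mathbb{Y}_i\subseteq\mathbb{X}$ such that (a) $p_{ij}(\varepsilon)>0$ for $j\in\mathbb{Y}_i$ and all $\varepsilon\in(0,\varepsilon_0]$; (b) $p_{ij}(\varepsilon)=0$ for $j\notin\mathbb{Y}_i$; (c) for every $i,j$ there exist $n\ge1$ and $i=l_0,\dots,l_n=j$ with $l_m\in\mathbb{Y}_{l_{m-1}}$. Condition D': for all $i$ and $j\in\mathbb{Y}_i$, $p_{ij}(\varepsilon)=\sum_{l=l^-_{ij}}^{l^+_{ij}}a_{ij}[l]\varepsilon^l+o_{ij}(\varepsilon)$ on $(0,\varepsilon_0]$ with integers $0\le l^-_{ij}\le l^+_{ij}$, $a_{ij}[l^-_{ij}]>0$, and $|o_{ij}(\varepsilon)|\le G_{ij}\varepsilon^{l^+_{ij}+\delta_{ij}}$ for $0<\varepsilon\le\varepsilon_{ij}$, where $\delta_{ij}\in(0,1]$, $G_{ij}\in(0,\infty)$, $\varepsilon_{ij}\in(0,\varepsilon_0]$. (Under A, $p_{rr}(\varepsilon)<1$.) Reduced chain: for $r\in\mathbb{X}$ let ${}_r\mathbb{X}=\mathbb{X}\setminus\{r\}$ and ${}_rp_{ij}(\varepsilon)=p_{ij}(\varepsilon)+p_{ir}(\varepsilon)\frac{p_{rj}(\varepsilon)}{1-p_{rr}(\varepsilon)}$,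 $i,j\in{}_r\mathbb{X}$ (the transition probabilities of the chain observed only at visits to ${}_r\mathbb{X}$). Its transition sets are ${}_r\mathbb{Y}_i=\{j\in{}_r\mathbb{X}: j\in\mathbb{Y}_i\ \text{or}\ (r\in\mathbb{Y}_i\text{ and }j\in\mathbb{Y}_r)\}$, $i\in{}_r\mathbb{X}$. Conditions A and D' for the reduced chain mean the same conditions with $\mathbb{X},p_{ij},\mathbb{Y}_i$ replaced by ${}_r\mathbb{X},{}_rp_{ij},{}_r\mathbb{Y}_i$. *)

(* concrete reals R. States of X = {1..N} are encoded as
   the naturals 0..N-1; a state space is a predicate on nat. *)
From Stdlib Require Import Reals List Lia Lra.
Open Scope R_scope.

(* finite sum over the naturals lo, lo+1, ..., hi (empty if hi < lo) *)
Definition sum_range (lo hi : nat) (f : nat -> R) : R :=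
  fold_right Rplus 0 (map f (seq lo (S hi - lo))).

Definition Xsp (N : nat) : nat -> Prop := fun i => (i < N)%nat.

Definition rXsp (N r : nat) : nat -> Prop := fun i => (i < N)%nat /\ i <> r.

Definition stochastic (N : nat) (eps0 : R) (p : R -> nat -> nat -> R) : Prop :=
  forall eps, 0 < eps <= eps0 ->
    (forall i j, (i < N)%nat -> (j < N)%nat -> 0 <= p eps i j) /\
    (forall i, (i < N)%nat -> sum_range 0 (N - 1) (fun j => p eps i j) = 1).

(* Condition A on state space S with transition sets Y i (Y i j <-> j in Y_i) *)
Definition condA (S : nat -> Prop) (eps0 : R) (p : R -> nat -> nat -> R)
    (Y : nat -> nat -> Prop) : Prop :=
  (forall i, S i -> exists j, Y i j) /\
  (forall i j, S i -> Y i j -> S j) /\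
  (forall i j, S i -> Y i j -> forall eps, 0 < eps <= eps0 -> 0 < p eps i j) /\
  (forall i j, S i -> S j -> ~ Y i j -> forall eps, 0 < eps <= eps0 -> p eps i j = 0) /\
  (forall i j, S i -> S j -> exists (n : nat) (l : nat -> nat),
      (1 <= n)%nat /\ l 0%nat = i /\ l n = j /\
      forall m, (1 <= m <= n)%nat -> Y (l (m - 1)%nat) (l m)).

(* The expansion of condition D' for one pair (i,j), with data
   lm = l^-, lp = l^+, a = a_ij[.], delta, G, epsij = eps_ij. *)
Definition condD'_pair (eps0 : R) (p : R -> nat -> nat -> R) (i j : nat)
    (lm lp : nat) (a : nat -> R) (delta G epsij : R) : Prop :=
  (lm <= lp)%nat /\ 0 < a lm /\
  0 < delta <= 1 /\ 0 < G /\ 0 < epsij <= eps0 /\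
  forall eps, 0 < eps <= epsij ->
    Rabs (p eps i j - sum_range lm lp (fun l => a l * eps ^ l))
      <= G * Rpower eps (INR lp + delta).

Definition rp (p : R -> nat -> nat -> R) (r : nat) : R -> nat -> nat -> R :=
  fun eps i j => p eps i j + p eps i r * (p eps r j / (1 - p eps r r)).

Definition rY (N : nat) (Y : nat -> nat -> Prop) (r : nat) : nat -> nat -> Prop :=
  fun i j => rXsp N r j /\ (Y i j \/ (Y i r /\ Y r j)).

(* Write [1 - p_rr] as the sum of the [p_rk], [k <> r].  Then every reduced
   probability [rp_ij] is obtained from the [p_ij] by sums, products and the
   single quotient [p_rj / (1 - p_rr)].  A function of the form
   [c eps^m + O(eps^(m + d))] with [c > 0] keeps this form, with the same [d],
   under these operations: all leading coefficients are positive, so sums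
   cannot cancel, and the quotient is fine because [1 - p_rr >= p_rj] forces
   the order of [1 - p_rr] to be at most that of [p_rj].  Taking [d = delta_circ]
   gives a one-term expansion of [rp_ij], which is condition D'.  Condition A
   for the reduced chain holds because [r] has a transition out of itself
   ([N >= 2] and irreducibility), and any walk through [r] can be shortcut at
   each block of visits to [r]. *)

From Stdlib Require Import Reals Lra Lia List Arith Classical Relations.
Open Scope R_scope.

Lemma pow_le_one x k : 0 <= x <= 1 -> x ^ k <= 1.
Proof. intros Hx. rewrite <- (pow1 k). apply pow_incr; lra. Qed.

Lemma Rle_pow_le1 x m n : 0 <= x <= 1 -> (m <= n)%nat -> x ^ n <= x ^ m.
Proof.
  intros Hx Hmn. replace n with (m + (n - m))%nat by lia. rewrite pow_add.
  pose proof (pow_le x m ltac:(lra)). pose proof (pow_le_one x (n - m) Hx).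
  pose proof (pow_le x (n - m) ltac:(lra)). nra.
Qed.

Lemma Rpower_pos x d : 0 < Rpower x d.
Proof. apply exp_pos. Qed.

Lemma Rle_Rpower_le1 x a b : 0 < x <= 1 -> a <= b -> Rpower x b <= Rpower x a.
Proof.
  intros Hx Hab. unfold Rpower.
  assert (Hln : ln x <= 0).
  { destruct (Req_dec x 1) as [->|Hx1]; [rewrite ln_1; lra|].
    rewrite <- ln_1. left. apply ln_increasing; lra. }
  destruct (Req_dec (b * ln x) (a * ln x)) as [->|Hne]; [lra|].
  left. apply exp_increasing. nra.
Qed.

Lemma Rpower_le_one x d : 0 < x <= 1 -> 0 <= d -> Rpower x d <= 1.
Proof. intros. rewrite <- (Rpower_O x) by lra. apply Rle_Rpower_le1; lra. Qed.

Lemma pow_lt_le_Rpower x d m n : 0 < x <= 1 -> d <= 1 -> (m < n)%nat ->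
  x ^ n <= x ^ m * Rpower x d.
Proof.
  intros Hx Hd Hmn. apply Rle_trans with (x ^ S m); [apply Rle_pow_le1; lra || lia|].
  simpl. rewrite Rmult_comm. apply Rmult_le_compat_l; [apply pow_le; lra|].
  rewrite <- (Rpower_1 x) at 1 by lra. apply Rle_Rpower_le1; lra.
Qed.

Fixpoint sum_below (n : nat) (f : nat -> R) : R :=
  match n with O => 0 | S n => sum_below n f + f n end.

Lemma sum_below_eq0 n (f : nat -> R) :
  (forall k, (k < n)%nat -> f k = 0) -> sum_below n f = 0.
Proof.
  induction n as [|n IH]; intros Hf; simpl; [reflexivity|].
  rewrite IH, Hf; [ring | lia | intros; apply Hf; lia].
Qed.

Lemma sum_below_ext n (f g : nat -> R) :
  (forall k, (k < n)%nat -> f k = g k) -> sum_below n f = sum_below n g.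
Proof.
  induction n as [|n IH]; intros Hfg; simpl; [reflexivity|].
  rewrite IH, Hfg; [reflexivity | lia | intros; apply Hfg; lia].
Qed.

Lemma sum_below_nonneg n (f : nat -> R) :
  (forall x, (x < n)%nat -> 0 <= f x) -> 0 <= sum_below n f.
Proof.
  induction n as [|n IH]; intros Hf; simpl; [lra|].
  pose proof (Hf n ltac:(lia)). pose proof (IH (fun x Hx => Hf x ltac:(lia))). lra.
Qed.

Lemma sum_below_ge n (f : nat -> R) k :
  (forall x, (x < n)%nat -> 0 <= f x) -> (k < n)%nat -> f k <= sum_below n f.
Proof.
  induction n as [|n IH]; intros Hf Hk; simpl; [lia|].
  pose proof (sum_below_nonneg n f (fun x Hx => Hf x ltac:(lia))). pose proof (Hf n ltac:(lia)).
  destruct (Nat.eq_dec k n) as [->|Hkn]; [lra|].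
  pose proof (IH (fun x Hx => Hf x ltac:(lia)) ltac:(lia)). lra.
Qed.

Lemma sum_below_drop n (f : nat -> R) r : (r < n)%nat ->
  sum_below n f = sum_below n (fun k => if k =? r then 0 else f k) + f r.
Proof.
  induction n as [|n IH]; intros Hr; simpl; [lia|].
  destruct (Nat.eqb_spec n r) as [->|Hnr].
  - rewrite (sum_below_ext r f (fun k => if k =? r then 0 else f k)); [ring|].
    intros k Hk. destruct (Nat.eqb_spec k r); [lia | reflexivity].
  - rewrite IH by lia. ring.
Qed.

Lemma fold_right_Rplus_init (l : list nat) (f : nat -> R) x :
  fold_right Rplus x (map f l) = fold_right Rplus 0 (map f l) + x.
Proof. induction l as [|k l IH]; simpl; [ring|]. rewrite IH. ring. Qed.

Lemma sum_range_sum_below N (f : nat -> R) : (1 <= N)%nat ->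
  sum_range 0 (N - 1) f = sum_below N f.
Proof.
  intros HN. unfold sum_range. replace (S (N - 1) - 0)%nat with N by lia. clear HN.
  induction N as [|N IH]; [reflexivity|].
  rewrite seq_S, map_app, fold_right_app. simpl.
  rewrite fold_right_Rplus_init, IH. ring.
Qed.

Lemma sum_list_nonneg (l : list nat) (f : nat -> R) :
  (forall x, 0 <= f x) -> 0 <= fold_right Rplus 0 (map f l).
Proof. intros Hf. induction l; simpl; [lra|]. pose proof (Hf a). lra. Qed.

Lemma sum_range_shift lo hi (f : nat -> R) : (lo <= hi)%nat ->
  sum_range lo hi f = f lo + sum_range (S lo) hi f.
Proof.
  intros Hle. unfold sum_range. replace (S hi - lo)%nat with (S (S hi - S lo)) by lia.
  reflexivity.
Qed.

Lemma Rabs_sum_range_pow_le (a : nat -> R) eps lo hi : 0 < eps <= 1 ->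
  Rabs (sum_range lo hi (fun l => a l * eps ^ l))
  <= sum_range lo hi (fun l => Rabs (a l)) * eps ^ lo.
Proof.
  intros Heps. unfold sum_range. generalize (S hi - lo)%nat as n. intros n. revert lo.
  induction n as [|n IH]; intros lo; simpl; [rewrite Rabs_R0; lra|].
  eapply Rle_trans; [apply Rabs_triang|].
  rewrite Rabs_mult, (Rabs_right (eps ^ lo)) by (apply Rle_ge, pow_le; lra).
  pose proof (IH (S lo)). pose proof (Rle_pow_le1 eps lo (S lo) ltac:(lra) ltac:(lia)).
  pose proof (sum_list_nonneg (seq (S lo) n) (fun l => Rabs (a l)) (fun l => Rabs_pos (a l))).
  nra.
Qed.

Lemma Rabs_div_le_of_lower x y A b :
  0 < b -> b <= y -> Rabs x <= A * b -> Rabs (x / y) <= A.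
Proof.
  intros Hb Hby Hx. unfold Rdiv. rewrite Rabs_mult, Rabs_inv, (Rabs_right y) by lra.
  apply (Rmult_le_reg_r y); [lra|]. rewrite Rmult_assoc, Rinv_l, Rmult_1_r by lra.
  assert (0 <= A) by (pose proof (Rabs_pos x); nra). nra.
Qed.

Definition near0 (e0 : R) (P : R -> Prop) : Prop :=
  exists e, 0 < e <= e0 /\ forall eps, 0 < eps <= e -> P eps.

Lemma near0_and e0 (P Q : R -> Prop) :
  near0 e0 P -> near0 e0 Q -> near0 e0 (fun eps => P eps /\ Q eps).
Proof.
  intros [e1 [He1 HP]] [e2 [He2 HQ]]. exists (Rmin e1 e2).
  pose proof (Rmin_l e1 e2); pose proof (Rmin_r e1 e2);
  pose proof (Rmin_pos e1 e2 ltac:(lra) ltac:(lra)).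
  split; [lra|]. intros eps Heps. split; [apply HP | apply HQ]; lra.
Qed.

Lemma near0_impl e0 (P Q : R -> Prop) :
  (forall eps, 0 < eps <= e0 -> P eps -> Q eps) -> near0 e0 P -> near0 e0 Q.
Proof.
  intros HPQ [e [He HP]]. exists e. split; [lra|]. intros eps Heps.
  apply HPQ; [lra | auto].
Qed.

Definition has_leading_term (d e0 : R) (f : R -> R) (c : R) (m : nat) : Prop :=
  0 < c /\ exists K, 0 <= K /\
    near0 e0 (fun eps => Rabs (f eps - c * eps ^ m) <= K * (eps ^ m * Rpower eps d)).

Section LeadingTerms.
Variables (d e0 : R).
Hypothesis Hd : 0 < d <= 1.
Hypothesis He0 : 0 < e0 <= 1.

Lemma has_leading_term_ext f g c m :
  (forall eps, 0 < eps <= e0 -> f eps = g eps) ->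
  has_leading_term d e0 f c m -> has_leading_term d e0 g c m.
Proof.
  intros Hfg [Hc [K [HK Hf]]]. split; [auto|]. exists K. split; [auto|].
  revert Hf. apply near0_impl. intros eps Heps. rewrite Hfg by auto. auto.
Qed.

Lemma has_leading_term_bigO f c m : has_leading_term d e0 f c m ->
  exists B, 0 <= B /\ near0 e0 (fun eps => Rabs (f eps) <= B * eps ^ m).
Proof.
  intros [Hc [K [HK Hf]]]. exists (c + K). split; [lra|].
  revert Hf. apply near0_impl. intros eps Heps Hf.
  pose proof (pow_lt eps m ltac:(lra)).
  pose proof (Rpower_le_one eps d ltac:(lra) ltac:(lra)). pose proof (Rpower_pos eps d).
  replace (f eps) with ((f eps - c * eps ^ m) + c * eps ^ m) by ring.
  eapply Rle_trans; [apply Rabs_triang|].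
  rewrite Rabs_mult, (Rabs_right c), (Rabs_right (eps ^ m)) by lra.
  assert (K * (eps ^ m * Rpower eps d) <= K * eps ^ m) by (apply Rmult_le_compat_l; nra).
  nra.
Qed.

Lemma has_leading_term_lower f c m : has_leading_term d e0 f c m ->
  near0 e0 (fun eps => c * eps ^ m / 2 <= f eps).
Proof.
  intros [Hc [K [HK Hf]]].
  set (b := c / (2 * (K + 1))).
  assert (Hb : b * (2 * (K + 1)) = c) by (unfold b; field; lra).
  assert (Hb0 : 0 < b) by (unfold b; apply Rdiv_lt_0_compat; lra).
  assert (Hsmall : near0 e0 (fun eps => Rpower eps d <= b)).
  { exists (Rmin e0 (Rpower b (/ d))).
    pose proof (Rmin_l e0 (Rpower b (/ d))); pose proof (Rmin_r e0 (Rpower b (/ d))).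
    pose proof (Rmin_pos e0 _ ltac:(lra) (Rpower_pos b (/ d))).
    split; [lra|]. intros eps Heps.
    replace b with (Rpower (Rpower b (/ d)) d)
      by (rewrite Rpower_mult, Rinv_l by lra; apply Rpower_1; lra).
    apply Rle_Rpower_l; lra. }
  generalize (near0_and _ _ _ Hf Hsmall). apply near0_impl.
  intros eps Heps [Herr HP]. pose proof (pow_lt eps m ltac:(lra)).
  pose proof (Rpower_pos eps d).
  assert (K * Rpower eps d <= c / 2) by nra.
  assert (K * (eps ^ m * Rpower eps d) <= c / 2 * eps ^ m) by nra.
  pose proof (Rle_abs (- (f eps - c * eps ^ m))). rewrite Rabs_Ropp in *. nra.
Qed.

Lemma has_leading_term_mul f g c1 m1 c2 m2 :
  has_leading_term d e0 f c1 m1 -> has_leading_term d e0 g c2 m2 ->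
  has_leading_term d e0 (fun eps => f eps * g eps) (c1 * c2) (m1 + m2).
Proof.
  intros Hf Hg. destruct (has_leading_term_bigO _ _ _ Hg) as [B [HB Hgb]].
  destruct Hf as [Hc1 [K1 [HK1 Hf]]]. destruct Hg as [Hc2 [K2 [HK2 Hg]]].
  split; [nra|]. exists (K1 * B + c1 * K2). split; [nra|].
  generalize (near0_and _ _ _ Hf (near0_and _ _ _ Hg Hgb)). apply near0_impl.
  intros eps Heps [Herr1 [Herr2 Hgeps]]. rewrite pow_add.
  pose proof (pow_lt eps m1 ltac:(lra)). pose proof (pow_lt eps m2 ltac:(lra)).
  pose proof (Rpower_pos eps d).
  replace (f eps * g eps - c1 * c2 * (eps ^ m1 * eps ^ m2)) with
    ((f eps - c1 * eps ^ m1) * g eps + c1 * eps ^ m1 * (g eps - c2 * eps ^ m2)) by ring.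
  eapply Rle_trans; [apply Rabs_triang|]. rewrite !Rabs_mult.
  rewrite (Rabs_right c1), (Rabs_right (eps ^ m1)) by lra.
  pose proof (Rabs_pos (f eps - c1 * eps ^ m1)). pose proof (Rabs_pos (g eps)).
  assert (Rabs (f eps - c1 * eps ^ m1) * Rabs (g eps)
          <= K1 * (eps ^ m1 * Rpower eps d) * (B * eps ^ m2))
    by (apply Rmult_le_compat; auto).
  assert (c1 * eps ^ m1 * Rabs (g eps - c2 * eps ^ m2)
          <= c1 * eps ^ m1 * (K2 * (eps ^ m2 * Rpower eps d)))
    by (apply Rmult_le_compat_l; nra).
  nra.
Qed.

Lemma has_leading_term_add_lt f g c1 m1 c2 m2 :
  has_leading_term d e0 f c1 m1 -> has_leading_term d e0 g c2 m2 -> (m1 < m2)%nat ->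
  has_leading_term d e0 (fun eps => f eps + g eps) c1 m1.
Proof.
  intros Hf Hg Hlt. destruct (has_leading_term_bigO _ _ _ Hg) as [B [HB Hgb]].
  destruct Hf as [Hc1 [K1 [HK1 Hf]]].
  split; [auto|]. exists (K1 + B). split; [lra|].
  generalize (near0_and _ _ _ Hf Hgb). apply near0_impl.
  intros eps Heps [Herr Hgeps].
  pose proof (pow_lt_le_Rpower eps d m1 m2 ltac:(lra) ltac:(lra) Hlt).
  replace (f eps + g eps - c1 * eps ^ m1) with ((f eps - c1 * eps ^ m1) + g eps) by ring.
  eapply Rle_trans; [apply Rabs_triang|]. nra.
Qed.

Lemma has_leading_term_add f g c1 m1 c2 m2 :
  has_leading_term d e0 f c1 m1 -> has_leading_term d e0 g c2 m2 ->
  exists c, has_leading_term d e0 (fun eps => f eps + g eps) c (Nat.min m1 m2).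
Proof.
  intros Hf Hg. destruct (Nat.lt_trichotomy m1 m2) as [Hlt|[<-|Hlt]].
  - exists c1. rewrite Nat.min_l by lia. eapply has_leading_term_add_lt; eauto.
  - exists (c1 + c2). rewrite Nat.min_id.
    destruct Hf as [Hc1 [K1 [HK1 Hf]]]. destruct Hg as [Hc2 [K2 [HK2 Hg]]].
    split; [lra|]. exists (K1 + K2). split; [lra|].
    generalize (near0_and _ _ _ Hf Hg). apply near0_impl. intros eps _ [Herr1 Herr2].
    replace (f eps + g eps - (c1 + c2) * eps ^ m1)
      with ((f eps - c1 * eps ^ m1) + (g eps - c2 * eps ^ m1)) by ring.
    eapply Rle_trans; [apply Rabs_triang|]. lra.
  - exists c2. rewrite Nat.min_r by lia.
    apply has_leading_term_ext with (fun eps => g eps + f eps); [intros; ring|].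
    eapply has_leading_term_add_lt; eauto.
Qed.

Lemma has_leading_term_div f g c1 m1 c2 m2 :
  has_leading_term d e0 f c1 m1 -> has_leading_term d e0 g c2 m2 -> (m2 <= m1)%nat ->
  has_leading_term d e0 (fun eps => f eps / g eps) (c1 / c2) (m1 - m2).
Proof.
  intros Hf Hg Hle. pose proof (has_leading_term_lower _ _ _ Hg) as Hglow.
  destruct Hf as [Hc1 [K1 [HK1 Hf]]]. destruct Hg as [Hc2 [K2 [HK2 Hg]]].
  set (c := c1 / c2). assert (Hc : 0 < c) by (apply Rdiv_lt_0_compat; lra).
  split; [auto|]. exists (2 * (K1 + c * K2) / c2). split.
  { apply Rmult_le_pos; [nra | left; apply Rinv_0_lt_compat; lra]. }
  generalize (near0_and _ _ _ Hf (near0_and _ _ _ Hg Hglow)). apply near0_impl.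
  intros eps Heps [Herr1 [Herr2 Hgeps]].
  set (k := (m1 - m2)%nat). set (P := Rpower eps d) in *.
  assert (Hm1 : eps ^ m1 = eps ^ k * eps ^ m2) by (rewrite <- pow_add; f_equal; lia).
  rewrite Hm1 in Herr1.
  pose proof (pow_lt eps m2 ltac:(lra)). pose proof (pow_lt eps k ltac:(lra)).
  assert (0 < P) by apply Rpower_pos.
  assert (Hgpos : 0 < g eps) by nra.
  (* the leading terms cancel in [f - c eps^k g] *)
  assert (Hnum : Rabs (f eps - c * eps ^ k * g eps)
                 <= (K1 + c * K2) * eps ^ k * eps ^ m2 * P).
  { replace (f eps - c * eps ^ k * g eps) with
      ((f eps - c1 * (eps ^ k * eps ^ m2)) - c * eps ^ k * (g eps - c2 * eps ^ m2))
      by (unfold c; field; lra).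
    unfold Rminus at 1. eapply Rle_trans; [apply Rabs_triang|].
    rewrite Rabs_Ropp, Rabs_mult, Rabs_mult, (Rabs_right c), (Rabs_right (eps ^ k)) by lra.
    assert (c * eps ^ k * Rabs (g eps - c2 * eps ^ m2)
            <= c * eps ^ k * (K2 * (eps ^ m2 * P)))
      by (apply Rmult_le_compat_l; nra).
    nra. }
  replace (f eps / g eps - c * eps ^ k) with ((f eps - c * eps ^ k * g eps) / g eps)
    by (field; lra).
  apply Rabs_div_le_of_lower with (c2 * eps ^ m2 / 2); [nra | exact Hgeps |].
  replace (2 * (K1 + c * K2) / c2 * (eps ^ k * P) * (c2 * eps ^ m2 / 2))
    with ((K1 + c * K2) * eps ^ k * eps ^ m2 * P) by (field; lra).
  exact Hnum.
Qed.

Lemma has_leading_term_sum_below (F : nat -> R -> R) (P : nat -> Prop)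
    (ord : nat -> nat) n :
  (forall k, (k < n)%nat -> P k -> exists c, has_leading_term d e0 (F k) c (ord k)) ->
  (forall k, (k < n)%nat -> ~ P k -> forall eps, 0 < eps <= e0 -> F k eps = 0) ->
  (exists k, (k < n)%nat /\ P k) ->
  exists c m, has_leading_term d e0 (fun eps => sum_below n (fun k => F k eps)) c m /\
    forall k, (k < n)%nat -> P k -> (m <= ord k)%nat.
Proof.
  induction n as [|n IH]; intros Hlead Hzero [k0 [Hk0 HPk0]]; [lia|].
  destruct (classic (exists k, (k < n)%nat /\ P k)) as [Hex|Hnone].
  - destruct (IH (fun k Hk => Hlead k ltac:(lia)) (fun k Hk => Hzero k ltac:(lia)) Hex)
      as [c [m [Hsum Hord]]].
    destruct (classic (P n)) as [HPn|HPn].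
    + destruct (Hlead n ltac:(lia) HPn) as [cn Hn].
      destruct (has_leading_term_add _ _ _ _ _ _ Hsum Hn) as [c' Hc'].
      exists c', (Nat.min m (ord n)). split; [exact Hc'|].
      intros k Hk HPk. destruct (Nat.eq_dec k n) as [->|Hkn]; [lia|].
      specialize (Hord k ltac:(lia) HPk). lia.
    + exists c, m. split.
      * apply has_leading_term_ext with (2 := Hsum). intros eps Heps. simpl.
        rewrite (Hzero n) by auto. ring.
      * intros k Hk HPk. destruct (Nat.eq_dec k n) as [->|Hkn]; [contradiction|].
        apply Hord; [lia | auto].
  - assert (HPn : P n).
    { destruct (Nat.eq_dec k0 n) as [<-|Hkn]; [auto|].
      exfalso. apply Hnone. exists k0. split; [lia | auto]. }
    destruct (Hlead n ltac:(lia) HPn) as [cn Hn]. exists cn, (ord n). split.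
    + apply has_leading_term_ext with (2 := Hn). intros eps Heps. simpl.
      rewrite sum_below_eq0; [ring|]. intros k Hk. apply Hzero; [lia | | auto].
      intros HPk. apply Hnone. eauto.
    + intros k Hk HPk. destruct (Nat.eq_dec k n) as [->|Hkn]; [lia|].
      exfalso. apply Hnone. exists k. split; [lia | auto].
Qed.

End LeadingTerms.

Lemma condD'_pair_has_leading_term eps0 p i j lm lp a delta G epsij d :
  0 < eps0 <= 1 -> 0 < d <= delta ->
  condD'_pair eps0 p i j lm lp a delta G epsij ->
  has_leading_term d eps0 (fun eps => p eps i j) (a lm) lm.
Proof.
  intros He0 Hd (Hl & Ha & Hdelta & HG & Hepsij & Hexp). split; [auto|].
  set (B := sum_range (S lm) lp (fun l => Rabs (a l))).
  assert (HB : 0 <= B) by (apply sum_list_nonneg; intros; apply Rabs_pos).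
  exists (B + G). split; [lra|]. exists epsij. split; [lra|]. intros eps Heps.
  specialize (Hexp eps Heps). rewrite sum_range_shift in Hexp by auto.
  rewrite Rpower_plus, Rpower_pow in Hexp by lra.
  pose proof (Rabs_sum_range_pow_le a eps (S lm) lp ltac:(lra)) as Htail. fold B in Htail.
  set (T := sum_range (S lm) lp (fun l => a l * eps ^ l)) in *.
  replace (p eps i j - a lm * eps ^ lm) with ((p eps i j - (a lm * eps ^ lm + T)) + T) by ring.
  eapply Rle_trans; [apply Rabs_triang|].
  pose proof (pow_lt eps lm ltac:(lra)).
  assert (eps ^ S lm <= eps ^ lm * Rpower eps d)
    by (apply pow_lt_le_Rpower; lra || lia).
  assert (eps ^ lp * Rpower eps delta <= eps ^ lm * Rpower eps d).
  { apply Rmult_le_compat; [apply pow_le; lra | left; apply Rpower_pos | |].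
    - apply Rle_pow_le1; lra || lia.
    - apply Rle_Rpower_le1; lra. }
  assert (B * eps ^ S lm <= B * (eps ^ lm * Rpower eps d)) by (apply Rmult_le_compat_l; lra).
  assert (G * (eps ^ lp * Rpower eps delta) <= G * (eps ^ lm * Rpower eps d))
    by (apply Rmult_le_compat_l; lra).
  lra.
Qed.

Lemma has_leading_term_condD'_pair eps0 p i j c m d : 0 < d <= 1 ->
  has_leading_term d eps0 (fun eps => p eps i j) c m ->
  exists G e, condD'_pair eps0 p i j m m (fun _ => c) d G e.
Proof.
  intros Hd [Hc [K [HK [e [He Hexp]]]]]. exists (K + 1), e.
  repeat split; try lia; try lra. intros eps Heps. specialize (Hexp eps Heps).
  unfold sum_range. replace (S m - m)%nat with 1%nat by lia. simpl.
  rewrite Rplus_0_r, Rpower_plus, Rpower_pow by lra.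
  assert (0 <= eps ^ m * Rpower eps d)
    by (apply Rmult_le_pos; [apply pow_le; lra | left; apply Rpower_pos]).
  nra.
Qed.

Definition walk (Y : nat -> nat -> Prop) (i j : nat) : Prop :=
  exists (n : nat) (l : nat -> nat), (1 <= n)%nat /\ l 0%nat = i /\ l n = j /\
    forall m, (1 <= m <= n)%nat -> Y (l (m - 1)%nat) (l m).

Lemma walk_of_clos_trans (Y : nat -> nat -> Prop) i j :
  clos_trans nat Y i j -> walk Y i j.
Proof.
  intros Hij. apply clos_trans_tn1 in Hij.
  induction Hij as [j Hj|j k Hjk _ [n [l [Hn [Hl0 [Hln Hl]]]]]].
  - exists 1%nat, (fun m => if m =? 0 then i else j). repeat split; [lia|].
    intros m Hm. replace m with 1%nat by lia. exact Hj.
  - exists (S n), (fun m => if m =? S n then k else l m). repeat split; [lia | | |].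
    + simpl. exact Hl0.
    + rewrite Nat.eqb_refl. reflexivity.
    + intros m Hm. destruct (Nat.eqb_spec m (S n)) as [->|Hmn].
      * replace (S n - 1)%nat with n by lia.
        destruct (Nat.eqb_spec n (S n)); [lia|]. rewrite Hln. exact Hjk.
      * destruct (Nat.eqb_spec (m - 1) (S n)); [lia|]. apply Hl. lia.
Qed.

Lemma exists_crossing (P : nat -> Prop) k :
  P 0%nat -> ~ P k -> exists q, (q < k)%nat /\ P q /\ ~ P (S q).
Proof.
  intros HP0. induction k as [|k IH]; intros HPk; [contradiction|].
  destruct (classic (P k)) as [HPk'|HPk'].
  - exists k. auto.
  - destruct (IH HPk') as [q [Hq HPq]]. exists q. split; [lia | auto].
Qed.

Lemma walk_stays_in (X : nat -> Prop) (Y : nat -> nat -> Prop) n (l : nat -> nat) :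
  (forall i j, X i -> Y i j -> X j) -> X (l 0%nat) ->
  (forall m, (1 <= m <= n)%nat -> Y (l (m - 1)%nat) (l m)) ->
  forall k, (k <= n)%nat -> X (l k).
Proof.
  intros Hcl Hl0 Hl. induction k as [|k IH]; intros Hk; [auto|].
  apply (Hcl (l k)); [apply IH; lia|]. replace k with (S k - 1)%nat at 1 by lia. apply Hl. lia.
Qed.

(* A block of consecutive visits to [r] is a single reduced transition from the
   state before the block to the state after it. *)
Lemma reduced_walk N Y r i n (l : nat -> nat) :
  rXsp N r i -> l 0%nat = i -> (forall k, (k <= n)%nat -> (l k < N)%nat) ->
  (forall m, (1 <= m <= n)%nat -> Y (l (m - 1)%nat) (l m)) ->
  forall k, (1 <= k <= n)%nat -> l k <> r -> clos_trans nat (rY N Y r) i (l k).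
Proof.
  intros [Hi Hir] Hl0 HlN Hl k. induction k as [k IH] using lt_wf_ind. intros Hk Hlk.
  assert (Hstep : forall q, (q < k)%nat -> l q <> r -> rY N Y r (l q) (l k) ->
            clos_trans nat (rY N Y r) i (l k)).
  { intros [|q] Hq Hlq Hqk.
    - rewrite Hl0 in Hqk. apply t_step. exact Hqk.
    - apply t_trans with (l (S q)); [apply IH; [lia | lia | auto] | apply t_step; auto]. }
  assert (HYk : Y (l (k - 1)%nat) (l k)) by (apply Hl; lia).
  assert (HrX : rXsp N r (l k)) by (split; [apply HlN; lia | auto]).
  destruct (Nat.eq_dec (l (k - 1)%nat) r) as [Hr|Hr].
  - destruct (exists_crossing (fun q => l q <> r) (k - 1)) as [q [Hq [Hlq HlSq]]];
      [rewrite Hl0; auto | auto |].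
    apply (Hstep q); [lia | auto |]. split; [auto|]. right. split.
    + replace r with (l (S q)) by (apply NNPP; auto). replace q with (S q - 1)%nat at 1 by lia.
      apply Hl. lia.
    + rewrite <- Hr. exact HYk.
  - apply (Hstep (k - 1)%nat); [lia | auto |]. split; [auto | left; exact HYk].
Qed.

Section Reduction.
Variables (N : nat) (eps0 : R) (p : R -> nat -> nat -> R) (Y : nat -> nat -> Prop) (r : nat).
Variables (lm lp : nat -> nat -> nat) (a : nat -> nat -> nat -> R)
  (delta G epsij : nat -> nat -> R) (dc : R).
Hypothesis HN : (2 <= N)%nat.
Hypothesis He0 : 0 < eps0 <= 1.
Hypothesis Hst : stochastic N eps0 p.
Hypothesis HA : condA (Xsp N) eps0 p Y.
Hypothesis Hr : (r < N)%nat.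
Hypothesis HD : forall i j, (i < N)%nat -> Y i j ->
  condD'_pair eps0 p i j (lm i j) (lp i j) (a i j) (delta i j) (G i j) (epsij i j).
Hypothesis Hdc : 0 < dc <= 1.
Hypothesis Hdmin : forall i j, (i < N)%nat -> Y i j -> dc <= delta i j.

Lemma exit_from_r : exists k, (k < N)%nat /\ k <> r /\ Y r k.
Proof.
  destruct HA as (_ & Hcl & _ & _ & Hwalk).
  set (j := if r =? 0 then 1%nat else 0%nat).
  assert (Hj : (j < N)%nat /\ j <> r) by (unfold j; destruct (Nat.eqb_spec r 0); lia).
  destruct (Hwalk r j Hr (proj1 Hj)) as [n [l [Hn [Hl0 [Hln Hl]]]]].
  destruct (exists_crossing (fun q => l q = r) n) as [q [Hq [Hlq HlSq]]];
    [auto | rewrite Hln; exact (proj2 Hj) |].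
  exists (l (S q)). repeat split; [| auto |].
  - apply (walk_stays_in (Xsp N) Y n l Hcl); [rewrite Hl0; exact Hr | exact Hl | lia].
  - rewrite <- Hlq. replace q with (S q - 1)%nat at 1 by lia. apply Hl. lia.
Qed.

Lemma one_minus_prr_sum eps : 0 < eps <= eps0 ->
  1 - p eps r r = sum_below N (fun k => if k =? r then 0 else p eps r k).
Proof.
  intros Heps. destruct (Hst eps Heps) as [_ Hsum]. specialize (Hsum r Hr).
  rewrite sum_range_sum_below, (sum_below_drop N _ r Hr) in Hsum by lia. lra.
Qed.

Lemma one_minus_prr_pos eps : 0 < eps <= eps0 -> 0 < 1 - p eps r r.
Proof.
  intros Heps. destruct exit_from_r as [k [Hk [Hkr HYk]]].
  destruct HA as (_ & _ & Hpos & _). destruct (Hst eps Heps) as [Hnn _].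
  rewrite one_minus_prr_sum by auto.
  assert (Hterms : forall x, (x < N)%nat -> 0 <= (if x =? r then 0 else p eps r x))
    by (intros x Hx; destruct (x =? r); [lra | apply Hnn; auto]).
  apply Rlt_le_trans with (2 := sum_below_ge N _ k Hterms Hk).
  destruct (Nat.eqb_spec k r); [contradiction|]. apply (Hpos r k); auto.
Qed.

Lemma p_has_leading_term i j : (i < N)%nat -> Y i j ->
  has_leading_term dc eps0 (fun eps => p eps i j) (a i j (lm i j)) (lm i j).
Proof.
  intros Hi HY.
  apply condD'_pair_has_leading_term with (lp i j) (delta i j) (G i j) (epsij i j).
  - exact He0.
  - split; [lra | apply Hdmin; auto].
  - apply HD; auto.
Qed.

Lemma one_minus_prr_has_leading_term : exists c m,
  has_leading_term dc eps0 (fun eps => 1 - p eps r r) c m /\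
  forall k, (k < N)%nat -> k <> r -> Y r k -> (m <= lm r k)%nat.
Proof.
  destruct HA as (_ & _ & _ & Hzero & _).
  set (F := fun k eps => if k =? r then 0 else p eps r k).
  assert (Hlead : forall k, (k < N)%nat -> k <> r /\ Y r k ->
            exists c, has_leading_term dc eps0 (F k) c (lm r k)).
  { intros k Hk [Hkr HYk]. exists (a r k (lm r k)).
    apply has_leading_term_ext with (2 := p_has_leading_term r k Hr HYk).
    intros eps _. unfold F. destruct (Nat.eqb_spec k r); [contradiction | reflexivity]. }
  assert (HF0 : forall k, (k < N)%nat -> ~ (k <> r /\ Y r k) ->
            forall eps, 0 < eps <= eps0 -> F k eps = 0).
  { intros k Hk HPk eps Heps. unfold F. destruct (Nat.eqb_spec k r) as [|Hkr]; [reflexivity|].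
    apply Hzero; auto. }
  assert (Hexit : exists k, (k < N)%nat /\ (k <> r /\ Y r k))
    by (destruct exit_from_r as [k [Hk HPk]]; eauto).
  destruct (has_leading_term_sum_below dc eps0 Hdc He0 F _ _ N Hlead HF0 Hexit)
    as [c [m [Hsum Hord]]].
  exists c, m. split; [|intros; apply Hord; auto].
  apply has_leading_term_ext with (2 := Hsum). intros eps Heps.
  symmetry. apply one_minus_prr_sum. auto.
Qed.

Lemma escape_has_leading_term j : (j < N)%nat -> j <> r -> Y r j -> exists c m,
  has_leading_term dc eps0 (fun eps => p eps r j / (1 - p eps r r)) c m.
Proof.
  intros Hj Hjr HYj. destruct one_minus_prr_has_leading_term as [c [m [Hlead Hord]]].
  do 2 eexists. apply (has_leading_term_div _ _ Hdc He0 _ _ _ _ _ _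
                         (p_has_leading_term r j Hr HYj) Hlead (Hord j Hj Hjr HYj)).
Qed.

Lemma rp_has_leading_term i j : rXsp N r i -> rY N Y r i j -> exists c m,
  has_leading_term dc eps0 (fun eps => rp p r eps i j) c m.
Proof.
  intros [Hi Hir] [[Hj Hjr] HYij]. destruct HA as (_ & _ & _ & Hzero & _).
  unfold rp. destruct (classic (Y i r /\ Y r j)) as [[HYir HYrj]|Hnot].
  - destruct (escape_has_leading_term j Hj Hjr HYrj) as [cq [mq Hq]].
    pose proof (has_leading_term_mul _ _ Hdc He0 _ _ _ _ _ _ (p_has_leading_term i r Hi HYir) Hq)
      as Hprod.
    destruct (classic (Y i j)) as [HY|HY].
    + destruct (has_leading_term_add _ _ Hdc He0 _ _ _ _ _ _ (p_has_leading_term i j Hi HY) Hprod)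
        as [c Hc].
      eauto.
    + do 2 eexists. apply has_leading_term_ext with (2 := Hprod). intros eps Heps.
      cbv beta. rewrite (Hzero i j); auto. ring.
  - destruct HYij as [HY|]; [|contradiction].
    do 2 eexists. apply has_leading_term_ext with (2 := p_has_leading_term i j Hi HY).
    intros eps Heps. destruct (classic (Y i r)) as [HYir|HYir].
    + rewrite (Hzero r j); auto. unfold Rdiv. ring.
    + rewrite (Hzero i r); auto. ring.
Qed.
Lemma rp_pos i j eps :
  rXsp N r i -> rY N Y r i j -> 0 < eps <= eps0 -> 0 < rp p r eps i j.
Proof.
  intros [Hi Hir] [[Hj Hjr] HYij] Heps. destruct HA as (_ & _ & Hpos & _).
  destruct (Hst eps Heps) as [Hnn _]. pose proof (one_minus_prr_pos eps Heps).
  assert (0 <= p eps i j) by auto. assert (0 <= p eps i r) by auto.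
  assert (0 <= p eps r j) by auto.
  assert (0 <= p eps r j / (1 - p eps r r))
    by (apply Rmult_le_pos; [lra | left; apply Rinv_0_lt_compat; lra]).
  unfold rp. destruct HYij as [HY|[HYir HYrj]].
  - assert (0 < p eps i j) by (apply Hpos; auto). nra.
  - assert (0 < p eps i r) by (apply Hpos; auto).
    assert (0 < p eps r j / (1 - p eps r r)) by (apply Rdiv_lt_0_compat; [apply Hpos | ]; auto).
    nra.
Qed.

Lemma rp_eq0 i j eps : rXsp N r i -> rXsp N r j -> ~ rY N Y r i j -> 0 < eps <= eps0 ->
  rp p r eps i j = 0.
Proof.
  intros [Hi Hir] [Hj Hjr] HnY Heps. destruct HA as (_ & _ & _ & Hzero & _).
  unfold rp. rewrite (Hzero i j); auto; [|intros HY; apply HnY; split; [split|left]; auto].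
  destruct (classic (Y i r)) as [HYir|HYir].
  - rewrite (Hzero r j); auto; [unfold Rdiv; ring|].
    intros HYrj. apply HnY. split; [split|right]; auto.
  - rewrite (Hzero i r); auto. ring.
Qed.

Lemma reduced_irreducible i j : rXsp N r i -> rXsp N r j -> walk (rY N Y r) i j.
Proof.
  intros Hi [Hj Hjr]. destruct HA as (_ & Hcl & _ & _ & Hwalk).
  destruct (Hwalk i j (proj1 Hi) Hj) as [n [l [Hn [Hl0 [Hln Hl]]]]].
  apply walk_of_clos_trans. rewrite <- Hln.
  apply (reduced_walk N Y r i n l Hi Hl0); [| auto | lia | congruence].
  intros k Hk. apply (walk_stays_in (Xsp N) Y n l Hcl); [rewrite Hl0; apply Hi | auto | auto].
Qed.

Lemma reduced_condA : condA (rXsp N r) eps0 (rp p r) (rY N Y r).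
Proof.
  split; [|split; [|split; [|split]]].
  - intros i [Hi Hir]. destruct HA as (Hne & Hcl & _).
    destruct (Hne i Hi) as [j HY]. destruct (Nat.eq_dec j r) as [->|Hjr].
    + destruct exit_from_r as [k [Hk [Hkr HYk]]]. exists k. split; [split|right]; auto.
    + exists j. split; [split; [apply (Hcl i); auto | auto] | left; auto].
  - intros i j _ [HrX _]. exact HrX.
  - intros i j Hi HY eps Heps. apply rp_pos; auto.
  - intros i j Hi Hj HnY eps Heps. apply rp_eq0; auto.
  - exact reduced_irreducible.
Qed.
End Reduction.

Theorem theorem1 (N : nat) (eps0 : R) (p : R -> nat -> nat -> R)
    (Y : nat -> nat -> Prop)
    (lm lp : nat -> nat -> nat) (a : nat -> nat -> nat -> R)
    (delta G epsij : nat -> nat -> R) (delta_circ : R) :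
  (2 <= N)%nat ->
  0 < eps0 <= 1 ->
  stochastic N eps0 p ->
  condA (Xsp N) eps0 p Y ->
  (forall i j, (i < N)%nat -> Y i j ->
     condD'_pair eps0 p i j (lm i j) (lp i j) (a i j)
       (delta i j) (G i j) (epsij i j)) ->
  (* delta_circ = min over i in X, j in Y_i of delta i j *)
  (exists i j, (i < N)%nat /\ Y i j /\ delta_circ = delta i j) ->
  (forall i j, (i < N)%nat -> Y i j -> delta_circ <= delta i j) ->
  forall r, (r < N)%nat ->
    condA (rXsp N r) eps0 (rp p r) (rY N Y r) /\
    (forall i j, rXsp N r i -> rY N Y r i j ->
       exists (rlm rlp : nat) (ra : nat -> R) (rdelta rG reps : R),
         condD'_pair eps0 (rp p r) i j rlm rlp ra rdelta rG reps /\
         delta_circ <= rdelta).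
Proof.
  intros HN He0 Hst HA HD Hdex Hdmin r Hr.
  assert (Hdc : 0 < delta_circ <= 1).
  { destruct Hdex as [i [j [Hi [HY ->]]]]. destruct (HD i j Hi HY) as (_ & _ & Hd & _). exact Hd. }
  split; [exact (reduced_condA N eps0 p Y r HN Hst HA Hr) |].
  intros i j Hi Hij.
  destruct (rp_has_leading_term N eps0 p Y r lm lp a delta G epsij delta_circ
              HN He0 Hst HA Hr HD Hdc Hdmin i j Hi Hij) as [c [m Hlead]].
  destruct (has_leading_term_condD'_pair _ _ _ _ _ _ _ Hdc Hlead) as [rG [reps HrD]].
  exists m, m, (fun _ => c), delta_circ, rG, reps. split; [exact HrD | lra].
Qed.
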